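(* Let $\alpha=(\alpha_1,\dots,\alpha_\ell)\models n$. Then $\mathbb F[\mathcal{OP}_\alpha]$ is a cyclic $H_n(0)$-module generated by the ordered set partition $(12\cdots n,\alpha)$, and the linear map sending $(w,\alpha)\mapsto\overline\pi_w\pi_{w_0(\alpha^c)}$ for all $w\in\mathfrak S_n$ with $\mathrm{Des}(w)\subseteq\mathrm{Des}(\alpha)$ is an isomorphism of $H_n(0)$-modules $\mathbb F[\mathcal{OP}_\alpha]\cong P_{(n),\alpha}=H_n(0)\pi_{w_0(\alpha^c)}$.
   Context: $H_n(0)$ is the 0-Hecke algebra over a field $\mathbb F$ with generators $\pi_1,\dots,\pi_{n-1}$ (relations $\pi_i^2=\pi_i$, far commutation, braid relations); $\overline\pi_i=\pi_i-1$; for a reduced expression $w=s_{i_1}\cdots s_{i_\ell}$, $\pi_w=\pi_{i_1}\cdots\pi_{i_\ell}$, $\overline\pi_w=\overline\pi_{i_1}\cdots\overline\pi_{i_\ell}$. For a composition $\alpha\models n$, $\mathrm{Des}(\alpha)$ is its set of partial sums (excluding $n$), $\alpha^c$ is the composition with $\mathrm{Des}(\alpha^c)=[n-1]\setminus\mathrm{Des}(\alpha)$, and $w_0(\alpha)$ is the minimal-length permutation with descent set $\mathrm{Des}(\alpha)$ (so $w_0(\alpha^c)$ is the minimal-length permutation with descent set $[n-1]\setminus \mathrm{Des}(\alpha)$). For compositions $\gamma\preceq\beta$ (i.e. $\mathrm{Des}(\gamma)\subseteq\mathrm{Des}(\beta)$), $P_{\gamma,\beta}=H_n(0)\overline\pi_{w_0(\gamma)}\pi_{w_0(\beta^c)}$;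 $(n)$ is the one-part composition. An ordered set partition $\sigma=(B_1\mid\cdots\mid B_k)$ of $[n]$ is identified with $(w,\alpha)$, $\alpha=(|B_1|,\dots,|B_k|)$ its shape and $w$ the permutation listing $B_1,\dots,B_k$ each increasingly; $\mathcal{OP}_\alpha$ is the set of ordered set partitions of shape $\alpha$ (equivalently $w$ with $\mathrm{Des}(w)\subseteq\mathrm{Des}(\alpha)$). $H_n(0)$ acts on $\mathbb F[\mathcal{OP}_\alpha]$ by: $\pi_i.\sigma=0$ if $i+1$ lies in a block to the left of $i$; $\pi_i.\sigma=\sigma+s_i(\sigma)$ if $i+1$ lies in a block to the right of $i$; $\pi_i.\sigma=\sigma$ if $i,i+1$ are in the same block; here $s_i(\sigma)$ swaps the letters $i$ and $i+1$. *)

From HB Require Import structures.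
From mathcomp Require Import all_boot all_order fingroup perm all_algebra.
Set Implicit Arguments. Unset Strict Implicit. Unset Printing Implicit Defensive.
Import GRing.Theory.

(* Conventions: letters and positions are 0-indexed elements of 'I_n.
   A permutation w : 'S_n is read as the word w(0) w(1) ... w(n-1).
   The paper's generator pi_i (i in [n-1]) is indexed here by i-1 : 'I_n,
   i.e. generator index i : 'I_n with i.+1 < n, swapping letters i and i+1. *)

Section Defs.
Variable n : nat.

Definition nxt (i : 'I_n) : 'I_n := odflt i (insub i.+1 : option 'I_n).

Definition sgen (i : 'I_n) : 'S_n := tperm i (nxt i).

Definition validgen (i : 'I_n) : bool := i.+1 < n.
Definition validword (ws : seq 'I_n) : bool := all validgen ws.

(* s_i w : swap the letters i, i+1 in the word w (apply w, then s_i) *)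
Definition lmul (i : 'I_n) (w : 'S_n) : 'S_n := (w * sgen i)%g.

(* the permutation s_{i1} s_{i2} ... s_{ik} (composition of functions) *)
Definition wordperm (ws : seq 'I_n) : 'S_n := foldr lmul 1%g ws.

(* Coxeter length = number of inversions *)
Definition len (w : 'S_n) : nat :=
  #|[set pq : 'I_n * 'I_n | (pq.1 < pq.2)%N && (w pq.2 < w pq.1)%N]|.

Definition reduced_word (ws : seq 'I_n) (w : 'S_n) : bool :=
  [&& validword ws, wordperm ws == w & size ws == len w].

(* descent set of w, as a set of (1-indexed) descents d in [n-1]:
   d is a descent iff w(d-1) > w(d) in 0-indexed positions *)
Definition wDes (w : 'S_n) : pred nat :=
  fun d => [exists p : 'I_n, [exists q : 'I_n,
              [&& val q == (val p).+1, (w q < w p)%N & d == val q]]].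

Definition is_composition (al : seq nat) : bool :=
  all (fun a => 0 < a)%N al && (sumn al == n).

Definition Des (al : seq nat) : seq nat :=
  [seq sumn (take k al) | k <- iota 1 (size al).-1].

Definition DesC (al : seq nat) : pred nat :=
  fun d => [&& (0 < d)%N, (d < n)%N & d \notin Des al].

Definition is_w0c (al : seq nat) (v : 'S_n) : Prop :=
  wDes v =1 DesC al /\
  forall u : 'S_n, wDes u =1 DesC al -> (len v <= len u)%N.

(* ordered set partitions of shape alpha, as permutations w with
   Des(w) subset Des(alpha) *)
Definition isOP (al : seq nat) (w : 'S_n) : bool :=
  [forall d : 'I_n, wDes w d ==> (val d \in Des al)].

Definition OP (al : seq nat) := {w : 'S_n | isOP al w}.

Definition blk (al : seq nat) (p : 'I_n) : nat := count (fun d => d <= p)%N (Des al).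

Local Open Scope ring_scope.
Variable F : fieldType.

(* ----- H_n(0) realised in its regular representation: an element is
   its coefficient vector on the basis {pi_w : w in S_n}. *)
Definition Hn := {ffun 'S_n -> F}.

Definition eH (w : 'S_n) : Hn := [ffun u => (u == w)%:R].

(* pi_i pi_w = pi_{s_i w} if len(s_i w) > len w, and pi_w otherwise *)
Definition tgt (i : 'I_n) (w : 'S_n) : 'S_n :=
  if (len w < len (lmul i w))%N then lmul i w else w.

(* left multiplication by the generator pi_i *)
Definition hpi (i : 'I_n) (h : Hn) : Hn :=
  [ffun u => \sum_(w : 'S_n | tgt i w == u) h w].

Definition hpibar (i : 'I_n) (h : Hn) : Hn := hpi i h - h.

Definition hpi_word (ws : seq 'I_n) (h : Hn) : Hn := foldr hpi h ws.
Definition hpibar_word (ws : seq 'I_n) (h : Hn) : Hn := foldr hpibar h ws.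

(* h lies in the left ideal H_n(0) h0 (spanned by pi_u h0, u in S_n,
   i.e. by all generator words applied to h0) *)
Definition in_left_ideal (h0 h : Hn) : Prop :=
  exists (m : nat) (c : 'I_m -> F) (ws : 'I_m -> seq 'I_n),
    (forall k, validword (ws k)) /\
    h = [ffun u => \sum_(k < m) c k * hpi_word (ws k) h0 u].

Variable al : seq nat.

Definition Mod := {ffun OP al -> F}.

Definition eM (s : OP al) : Mod := [ffun t => (t == s)%:R].

(* coefficient of tau in pi_i . sigma *)
Definition opcoef (i : 'I_n) (s t : OP al) : F :=
  let w := val s in
  let bi := blk al ((w^-1)%g i) in
  let bj := blk al ((w^-1)%g (nxt i)) in
  if (bj < bi)%N then 0                       (* i+1 left of i *)
  else if (bi < bj)%N then                    (* i+1 right of i *)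
    (val t == w)%:R + (val t == lmul i w)%:R
  else (t == s)%:R.

Definition opi (i : 'I_n) (x : Mod) : Mod :=
  [ffun t => \sum_(s : OP al) x s * opcoef i s t].

Definition opi_word (ws : seq 'I_n) (x : Mod) : Mod := foldr opi x ws.

End Defs.

From HB Require Import structures.
From mathcomp Require Import all_boot all_order fingroup perm all_algebra.
From mathcomp Require Import zify ring.
Import GRing.Theory.
Set Implicit Arguments. Unset Strict Implicit. Unset Printing Implicit Defensive.

(* The permutation w0(alpha^c) reverses every block of alpha; it is
   the only permutation of minimal length with descent set [n-1] \ Des(alpha).
   Since the operators pibar_i satisfy the braid relations, Matsumoto's theorem
   makes pibar_w well defined.  For w increasing on the blocks of alpha, lengths
   add in w0(alpha^c) w, so pibar_w pi_{w0(alpha^c)} has leading term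
   pi_{w0(alpha^c) w}; these leading terms are distinct, which gives
   injectivity.  Comparing the blocks of the letters i and i+1 in w shows that
   pi_i acts on these elements exactly as on ordered set partitions, and
   pibar_i = pi_i - 1 shows that they span H_n(0) pi_{w0(alpha^c)}.  Finally
   (w, alpha) = (pi_i - 1) (s_i w, alpha) whenever i+1 precedes i in w, so
   induction on the length of w shows that (12...n, alpha) generates. *)

Section SimpleTranspositions.
Variable n : nat.
Implicit Types (i j : 'I_n) (w : 'S_n) (ws : seq 'I_n).

Definition pos w (x : 'I_n) : 'I_n := (w^-1)%g x.

Lemma app_pos w x : w (pos w x) = x.
Proof. by rewrite /pos permKV. Qed.

Lemma pos_app w x : pos w (w x) = x.
Proof. by rewrite /pos permK. Qed.

Lemma nxtE i : validgen i -> val (nxt i) = i.+1.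
Proof. by rewrite /validgen /nxt => h; rewrite insubT. Qed.

Lemma nxt_neq i : validgen i -> nxt i != i.
Proof. by move=> vi; rewrite -val_eqE nxtE //= gtn_eqF. Qed.

Lemma sgenL i : sgen i i = nxt i.
Proof. exact: tpermL. Qed.

Lemma sgenR i : sgen i (nxt i) = i.
Proof. exact: tpermR. Qed.

Lemma sgenD i (x : 'I_n) : validgen i -> val x != i -> val x != i.+1 -> sgen i x = x.
Proof. by move=> vi xi xi1; rewrite /sgen tpermD // -val_eqE ?nxtE // eq_sym. Qed.

Lemma lmulE i w x : lmul i w x = sgen i (w x).
Proof. by rewrite /lmul permM. Qed.

Lemma lmulK i : involutive (lmul i).
Proof. by move=> w; rewrite /lmul /sgen -mulgA tperm2 mulg1. Qed.

Lemma pos_lmul i w x : pos (lmul i w) x = pos w (sgen i x).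
Proof. by rewrite /pos /lmul invMg permM /sgen tpermV. Qed.

Lemma pos_neq i w : validgen i -> pos w i != pos w (nxt i).
Proof. by move=> vi; rewrite (inj_eq perm_inj) eq_sym nxt_neq. Qed.

Lemma ltn_sgen i x y : validgen i -> ~~ ((x == i) && (y == nxt i)) ->
  ~~ ((x == nxt i) && (y == i)) -> (sgen i x < sgen i y)%N = (x < y)%N.
Proof.
move=> vi; have hn := nxtE vi.
have fix_other z : z != i -> z != nxt i -> sgen i z = z.
  by move=> h1 h2; rewrite /sgen tpermD // eq_sym.
case: (eqVneq x i) => [->|xi]; [|case: (eqVneq x (nxt i)) => [->|xn]];
  (case: (eqVneq y i) => [->|yi]; [|case: (eqVneq y (nxt i)) => [->|yn]]);
  rewrite ?sgenL ?sgenR ?fix_other ?eqxx //=;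
  repeat match goal with H : is_true (_ != _) |- _ => move: H end;
  rewrite -?val_eqE /= ?hn => *; apply/idP/idP => *; lia.
Qed.

Definition inversions w :=
  [set pq : 'I_n * 'I_n | (pq.1 < pq.2)%N && (w pq.2 < w pq.1)%N].

Lemma lenE w : len w = #|inversions w|.
Proof. by []. Qed.

Lemma len1 : len (1%g : 'S_n) = 0%N.
Proof.
apply/eqP; rewrite lenE cards_eq0; apply/eqP/setP => -[p q].
by rewrite !inE /= !perm1; case: ltngtP.
Qed.

Lemma len_lmul_up i w : validgen i -> (pos w i < pos w (nxt i))%N ->
  len (lmul i w) = (len w).+1.
Proof.
move=> vi hab; rewrite !lenE; set a := pos w i; set b := pos w (nxt i).
suff -> : inversions (lmul i w) = (a, b) |: inversions w.
  by rewrite cardsU1 inE /= !app_pos hab /= nxtE // ltnNge leqnSn.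
apply/setP => -[p q]; rewrite !inE /= !lmulE.
case: (eqVneq (p, q) (a, b)) => [[-> ->]|neq] /=.
  by rewrite !app_pos sgenL sgenR hab nxtE //= ltnSn.
case pq: (p < q)%N => //=; apply: ltn_sgen => //; apply/negP => /andP[/eqP hq /eqP hp].
  move: pq; rewrite -(pos_app w q) -(pos_app w p) hq hp -/a -/b.
  by rewrite ltnNge ltnW.
by move: neq; rewrite -(pos_app w q) -(pos_app w p) hq hp eqxx.
Qed.

Lemma len_lmul_down i w : validgen i -> (pos w (nxt i) < pos w i)%N ->
  len w = (len (lmul i w)).+1.
Proof.
by move=> vi h; rewrite -{1}(lmulK i w) len_lmul_up // !pos_lmul sgenL sgenR.
Qed.

Lemma pos_ltgt i w : validgen i ->
  (pos w i < pos w (nxt i))%N || (pos w (nxt i) < pos w i)%N.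
Proof. by move=> vi; rewrite -neq_ltn val_eqE pos_neq. Qed.

Lemma len_lmul_le i w : validgen i -> (len (lmul i w) <= (len w).+1)%N.
Proof.
move=> vi; case/orP: (pos_ltgt w vi) => h; first by rewrite len_lmul_up.
by rewrite (len_lmul_down vi h) ltnW.
Qed.

Lemma tgtE i w : validgen i ->
  tgt i w = if (pos w i < pos w (nxt i))%N then lmul i w else w.
Proof.
move=> vi; rewrite /tgt; case/orP: (pos_ltgt w vi) => h.
  by rewrite h len_lmul_up // ltnSn.
by rewrite (len_lmul_down vi h) ltnNge leqnSn ltnNge ltnW.
Qed.

Lemma len_tgt i w : validgen i -> (len (tgt i w) <= (len w).+1)%N.
Proof. by move=> vi; rewrite tgtE //; case: ifP => // _; apply: len_lmul_le. Qed.

Lemma len_wordperm ws : validword ws -> (len (wordperm ws) <= size ws)%N.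
Proof.
elim: ws => [|i ws IH] /=; first by rewrite len1.
by case/andP => vi vws; apply: leq_trans (len_lmul_le _ vi) _; rewrite ltnS IH.
Qed.

Lemma reduced_cons i ws w : reduced_word (i :: ws) w ->
  [/\ validgen i, reduced_word ws (lmul i w) & (pos w (nxt i) < pos w i)%N].
Proof.
case/and3P => /= /andP[vi vws] /eqP hw /eqP hs.
have e : wordperm ws = lmul i w by rewrite -hw /wordperm /= lmulK.
have hl := len_wordperm vws; rewrite e in hl.
case/orP: (pos_ltgt w vi) => h.
  by move: hl; rewrite len_lmul_up // -hs ltnNge leqW.
split => //; apply/and3P; split => //; first by rewrite e.
by move: hs; rewrite (len_lmul_down vi h) => -[->].
Qed.

Lemma reduced_consI i ws w : validgen i -> (pos w (nxt i) < pos w i)%N ->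
  reduced_word ws (lmul i w) -> reduced_word (i :: ws) w.
Proof.
move=> vi h /and3P[vws /eqP e /eqP s]; apply/and3P; split => /=.
- by rewrite vi.
- by rewrite /wordperm /= -/(wordperm ws) e lmulK.
- by rewrite (len_lmul_down vi h) s.
Qed.

Lemma reduced_nil w : reduced_word [::] w -> w = 1%g.
Proof. by case/and3P => _ /eqP <-. Qed.

Lemma lmul_tperm_pos i w : lmul i w = (tperm (pos w i) (pos w (nxt i)) * w)%g.
Proof. by rewrite /lmul /sgen /pos -tpermJ conjgE invgK -!mulgA mulVg mulg1. Qed.

Lemma foldr_lmul ws x : foldr (@lmul n) x ws = (x * wordperm ws)%g.
Proof.
elim: ws => [|i ws IH] /=; first by rewrite /wordperm /= mulg1.
by rewrite IH /wordperm /= /lmul mulgA.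
Qed.

Lemma reduced_rcons ws w i : reduced_word ws w -> validgen i ->
  len (sgen i * w)%g = (len w).+1 -> reduced_word (rcons ws i) (sgen i * w)%g.
Proof.
case/and3P => vws /eqP <- /eqP sw vi lw; apply/and3P; split.
- by rewrite /validword all_rcons vi.
- by rewrite /wordperm foldr_rcons foldr_lmul /lmul mul1g.
- by rewrite size_rcons lw sw.
Qed.

End SimpleTranspositions.

Definition swapn (i y : nat) : nat :=
  if y == i then i.+1 else if y == i.+1 then i else y.

Lemma swapnP i y : (y = i /\ swapn i y = i.+1) \/ (y = i.+1 /\ swapn i y = i) \/
  (y <> i /\ y <> i.+1 /\ swapn i y = y).
Proof. by rewrite /swapn; case: eqP => ?; [left | case: eqP => ?; right; [left | right]]. Qed.

Section Matsumoto.
Variable n : nat.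
Implicit Types (i j : 'I_n) (w : 'S_n) (ws : seq 'I_n).

Lemma sgen_val i x : validgen i -> val (sgen i x) = swapn i x.
Proof.
move=> vi; rewrite /swapn; case: (eqVneq x i) => [->|xi].
  by rewrite sgenL nxtE // eqxx.
rewrite val_eqE (negbTE xi).
case: (eqVneq (val x) i.+1) => h; last by rewrite sgenD // val_eqE.
have -> : x = nxt i by apply: val_inj; rewrite nxtE.
by rewrite sgenR.
Qed.

Lemma lmul_far i j w : validgen i -> validgen j -> (i.+1 < j)%N ->
  lmul i (lmul j w) = lmul j (lmul i w).
Proof.
move=> vi vj ij; apply/permP => x; apply: val_inj.
rewrite !lmulE !sgen_val //; move: (val (w x)) => y.
by move: (swapnP j y) (swapnP i (swapn j y)) (swapnP i y) (swapnP j (swapn i y)); lia.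
Qed.

Lemma lmul_braid i j w : validgen i -> validgen j -> val j = i.+1 ->
  lmul i (lmul j (lmul i w)) = lmul j (lmul i (lmul j w)).
Proof.
move=> vi vj ij; apply/permP => x; apply: val_inj.
rewrite !lmulE !sgen_val // ij; move: (val (w x)) => y.
move: (swapnP i y) (swapnP i.+1 (swapn i y)) (swapnP i (swapn i.+1 (swapn i y))).
move: (swapnP i.+1 y) (swapnP i (swapn i.+1 y)) (swapnP i.+1 (swapn i (swapn i.+1 y))).
lia.
Qed.

Variables (X : Type) (T : 'I_n -> X -> X).
Hypothesis T_far : forall i j x, validgen i -> validgen j -> (i.+1 < j)%N ->
  T i (T j x) = T j (T i x).
Hypothesis T_braid : forall i j x, validgen i -> validgen j -> val j = i.+1 ->
  T i (T j (T i x)) = T j (T i (T j x)).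
Variable rw : 'S_n -> seq 'I_n.
Hypothesis rwP : forall w, reduced_word (rw w) w.

Let reduced_invariant x w := forall ws ws', reduced_word ws w ->
  reduced_word ws' w -> foldr T x ws = foldr T x ws'.

Let below x w := forall w', (len w' < len w)%N -> reduced_invariant x w'.

(* If [i] and [j] are both left descents of [w], then [w] has reduced words
   [j i ...] and [i j ...] (resp. the two braid words) ending with a common
   reduced word; the induction hypothesis applies to [s_i w] and [s_j w]. *)
Lemma matsumoto_far x w i j ws ws' : validgen i -> validgen j -> (i.+1 < j)%N ->
  below x w -> reduced_word (i :: ws) w -> reduced_word (j :: ws') w ->
  foldr T x (i :: ws) = foldr T x (j :: ws').
Proof.
move=> vi vj ij IH r r'.
case: (reduced_cons r) => _ rs di; case: (reduced_cons r') => _ rs' dj.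
have lti : (len (lmul i w) < len w)%N by rewrite (len_lmul_down vi di).
have ltj : (len (lmul j w) < len w)%N by rewrite (len_lmul_down vj dj).
have hn := nxtE vi; have hm := nxtE vj.
set u := lmul j (lmul i w).
have ri : reduced_word (j :: rw u) (lmul i w).
  apply: reduced_consI => //.
  by rewrite !pos_lmul (@sgenD _ i j) ?(@sgenD _ i (nxt j)) //= ?hm; lia.
have rj : reduced_word (i :: rw u) (lmul j w).
  apply: reduced_consI => //; last by rewrite lmul_far.
  by rewrite !pos_lmul (@sgenD _ j i) ?(@sgenD _ j (nxt i)) //= ?hn; lia.
by rewrite /= (IH _ lti _ _ rs ri) (IH _ ltj _ _ rs' rj) /= T_far.
Qed.

Lemma matsumoto_braid x w i j ws ws' : validgen i -> validgen j -> val j = i.+1 ->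
  below x w -> reduced_word (i :: ws) w -> reduced_word (j :: ws') w ->
  foldr T x (i :: ws) = foldr T x (j :: ws').
Proof.
move=> vi vj ij IH r r'.
case: (reduced_cons r) => _ rs di; case: (reduced_cons r') => _ rs' dj.
have lti : (len (lmul i w) < len w)%N by rewrite (len_lmul_down vi di).
have ltj : (len (lmul j w) < len w)%N by rewrite (len_lmul_down vj dj).
have hn := nxtE vi; have hm := nxtE vj.
have nij : nxt i = j by apply: val_inj; rewrite hn ij.
have s1 : sgen i j = i by rewrite -nij sgenR.
have s2 : sgen i i = j by rewrite sgenL.
have s3 : sgen i (nxt j) = nxt j by rewrite sgenD //= ?hm ?ij; lia.
have s4 : sgen j i = i by rewrite sgenD //= ?ij; lia.
rewrite nij in di.
set u := lmul i (lmul j (lmul i w)).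
have ri : reduced_word (j :: i :: rw u) (lmul i w).
  apply: reduced_consI => //; last apply: reduced_consI => //.
  - by rewrite !pos_lmul s3 s1; exact: ltn_trans dj di.
  - by rewrite !pos_lmul nij sgenL s3 s4 s2.
have rj : reduced_word (i :: j :: rw u) (lmul j w).
  apply: reduced_consI => //; last apply: reduced_consI => //.
  - by rewrite !pos_lmul nij sgenL s4; exact: ltn_trans dj di.
  - by rewrite !pos_lmul s3 sgenR s1 s4.
  - by rewrite /u lmul_braid.
by rewrite /= (IH _ lti _ _ rs ri) (IH _ ltj _ _ rs' rj) /= T_braid.
Qed.

Theorem matsumoto x w ws ws' : reduced_word ws w -> reduced_word ws' w ->
  foldr T x ws = foldr T x ws'.
Proof.
have [k] := ubnP (len w); elim: k w ws ws' => // k IHk w ws ws' lw r r'.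
have IH : below x w by move=> w' lt ws1 ws2; apply: IHk; exact: leq_trans lt lw.
case: ws r => [|i ws] r; case: ws' r' => [|j ws'] r'.
- by [].
- by case/and3P: r' => _ _ /eqP; case/and3P: r => _ _ /eqP <-.
- by case/and3P: r => _ _ /eqP; case/and3P: r' => _ _ /eqP <-.
case: (reduced_cons r) => vi rs di; case: (reduced_cons r') => vj rs' _.
case: (ltngtP i j) => [ij|ji|/val_inj eij].
- case: (ltngtP i.+1 j) => [h|h|h]; first exact: matsumoto_far vi vj h IH r r'.
    by lia.
  exact: matsumoto_braid vi vj (esym h) IH r r'.
- case: (ltngtP j.+1 i) => [h|h|h]; first exact: esym (matsumoto_far vj vi h IH r' r).
    by lia.
  exact: esym (matsumoto_braid vj vi (esym h) IH r' r).
- subst j; rewrite /= (IH _ _ _ _ rs rs') //.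
  by rewrite (len_lmul_down vi di).
Qed.

End Matsumoto.

Section ZeroHeckeRelations.
Variable n : nat.
Implicit Types (i j : 'I_n) (w : 'S_n).

Lemma tgt_idem i w : validgen i -> tgt i (tgt i w) = tgt i w.
Proof.
move=> vi; rewrite (tgtE w vi); case: ifP => h; rewrite tgtE // ?h //.
by rewrite !pos_lmul sgenL sgenR ltnNge ltnW.
Qed.

Lemma pos_tgt_other i w (x : 'I_n) : validgen i -> val x != i -> val x != i.+1 ->
  pos (tgt i w) x = pos w x.
Proof. by move=> vi h1 h2; rewrite tgtE //; case: ifP; rewrite ?pos_lmul ?sgenD. Qed.

Lemma tgt_far i j w : validgen i -> validgen j -> (i.+1 < j)%N ->
  tgt i (tgt j w) = tgt j (tgt i w).
Proof.
move=> vi vj ij; have hn := nxtE vi; have hm := nxtE vj.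
have posj u : pos (tgt j u) i = pos u i /\ pos (tgt j u) (nxt i) = pos u (nxt i).
  by split; rewrite pos_tgt_other ?hn //=; lia.
have posi u : pos (tgt i u) j = pos u j /\ pos (tgt i u) (nxt j) = pos u (nxt j).
  by split; rewrite pos_tgt_other ?hm //=; lia.
rewrite [tgt i (tgt j w)]tgtE // [tgt j (tgt i w)]tgtE //.
case: (posj w) (posi w) => -> -> [-> ->]; rewrite (tgtE w vi) (tgtE w vj).
by case: ifP => _; case: ifP => _ //; apply: lmul_far.
Qed.

(* Replaces the innermost [tgt k u] of the goal by its two cases, rewriting
   the case hypothesis with [pos_lmul] and the facts [sf]. *)
Ltac case_inner_tgt sf :=
  match goal with
  | |- context [tgt ?k ?u] =>
    lazymatch u with
    | context [tgt _ _] => fail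
    | _ => let V := fresh "V" in let H := fresh "H" in
           (have V : validgen k by assumption);
           rewrite (tgtE u V); clear V; case: ifP => H; [|move/negbT in H];
           rewrite ?pos_lmul ?sf in H
    end
  end.

(* Both sides arrange the letters [i], [i+1], [i+2] in decreasing order on the
   positions they occupy in [w]. *)
Lemma tgt_braid i j w : validgen i -> validgen j -> val j = i.+1 ->
  tgt i (tgt j (tgt i w)) = tgt j (tgt i (tgt j w)).
Proof.
move=> vi vj ij.
have hn := nxtE vi; have hm := nxtE vj.
have nij : nxt i = j by apply: val_inj; rewrite hn ij.
have s1 : sgen i j = i by rewrite -nij sgenR.
have s2 : sgen i i = j by rewrite sgenL.
have s3 : sgen i (nxt j) = nxt j by rewrite sgenD //= ?hm ?ij; lia.
have s4 : sgen j i = i by rewrite sgenD //= ?ij; lia.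
have s5 : sgen j j = nxt j by rewrite sgenL.
have s6 : sgen j (nxt j) = j by rewrite sgenR.
have d1 := pos_neq w vi; have d2 := pos_neq w vj.
have d3 : pos w i != pos w (nxt j).
  by rewrite (inj_eq perm_inj) -val_eqE /= hm ij; lia.
rewrite nij in d1.
have sf := (nij, s1, s2, s3, s4, s5, s6).
do 6 (try case_inner_tgt sf; try lia); try reflexivity; by rewrite lmul_braid.
Qed.

End ZeroHeckeRelations.

Section Inversions.
Variable n : nat.

Lemma card_lt_ord m : (m <= n)%N -> #|[set k : 'I_n | (k < m)%N]| = m.
Proof.
elim: m => [|m IH] h.
  by apply/eqP; rewrite cards_eq0; apply/eqP/setP => k; rewrite !inE.
have mn : (m < n)%N by [].
have -> : [set k : 'I_n | (k < m.+1)%N] = Ordinal mn |: [set k : 'I_n | (k < m)%N].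
  by apply/setP => k; rewrite !inE ltnS leq_eqVlt -(inj_eq val_inj).
by rewrite cardsU1 inE /= ltnn IH // ltnW.
Qed.

Lemma card_below (v : 'S_n) x : #|[set y | (v y < v x)%N]| = v x.
Proof.
have -> : [set y | (v y < v x)%N] = v @^-1: [set k : 'I_n | (k < v x)%N].
  by apply/setP => y; rewrite !inE.
by rewrite card_preimset ?card_lt_ord //; [apply: ltnW | apply: perm_inj].
Qed.

(* [v x] is the number of letters [v y] below it, and the set of such [y] is
   determined by the inversions of [v]. *)
Lemma inversions_inj (v r : 'S_n) : inversions v = inversions r -> v = r.
Proof.
move=> e; have key (u : 'S_n) x : [set y | (u y < u x)%N] =
    [set y : 'I_n | ((x < y)%N && ((x, y) \in inversions u))
                    || ((y < x)%N && ((y, x) \notin inversions u))].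
  apply/setP => y; rewrite !inE /=.
  case: (ltngtP x y) => h /=.
  - by rewrite orbF.
  - rewrite -leqNgt [RHS]leq_eqVlt.
    have -> : (nat_of_ord (u y) == u x) = false.
      apply/negbTE; rewrite (inj_eq val_inj) (inj_eq perm_inj).
      by apply/eqP => ey; move: h; rewrite ey ltnn.
    by [].
  - have -> : y = x by apply: val_inj => /=; rewrite h.
    by rewrite ltnn.
apply/permP => x; apply: val_inj.
by rewrite /= -card_below -(card_below r) !key e.
Qed.

Lemma wDes_succ (w : 'S_n) (p q : 'I_n) : q = p.+1 :> nat -> wDes w q = (w q < w p)%N.
Proof.
move=> qp; apply/existsP/idP => [[p' /existsP[q' /and3P[/eqP e1 lt /eqP e2]]]|lt].
  have eq : q' = q by apply: val_inj.
  have ep : p' = p by apply: val_inj; apply: succn_inj; rewrite -e1 eq.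
  by rewrite -eq -ep.
by exists p; apply/existsP; exists q; apply/and3P; split => //; apply/eqP.
Qed.

Lemma wDes_exists (w : 'S_n) (d : nat) : wDes w d ->
  exists p q : 'I_n, [/\ q = p.+1 :> nat, (w q < w p)%N & d = q].
Proof. by case/existsP => p /existsP[q /and3P[/eqP e1 lt /eqP e2]]; exists p, q. Qed.

End Inversions.

Section Composition.
Variables (n : nat) (al : seq nat).
Hypothesis Hal : is_composition n al.

Definition psum j := sumn (take j al).
Definition block (y : nat) := count (fun d => d <= y) (Des al).

Lemma blkE (w : 'S_n) (x : 'I_n) : blk al ((w^-1)%g x) = block (pos w x).
Proof. by []. Qed.

Lemma al_pos : all (fun a => 0 < a) al.
Proof. by case/andP: Hal. Qed.

Lemma sum_al : sumn al = n.
Proof. by case/andP: Hal => _ /eqP. Qed.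

Lemma psum0 : psum 0 = 0.
Proof. by rewrite /psum take0. Qed.

Lemma psum_ge j : (size al <= j)%N -> psum j = n.
Proof. by move=> h; rewrite /psum take_oversize // sum_al. Qed.

Lemma psumS j : (j < size al)%N -> psum j.+1 = psum j + nth 0 al j.
Proof. by move=> h; rewrite /psum (take_nth 0 h) sumn_rcons. Qed.

Lemma psum_ltS j : (j < size al)%N -> (psum j < psum j.+1)%N.
Proof.
move=> h; rewrite psumS // -{1}(addn0 (psum j)) ltn_add2l.
by have := all_nthP 0 al_pos; move/(_ j h).
Qed.

Lemma psum_mono j k : (j <= k)%N -> (psum j <= psum k)%N.
Proof.
elim: k => [|k IH]; first by rewrite leqn0 => /eqP ->.
rewrite leq_eqVlt => /orP[/eqP -> //|/IH h]; apply: leq_trans h _.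
case: (ltnP k (size al)) => hk; first exact: ltnW (psum_ltS hk).
by rewrite !psum_ge // ltnW.
Qed.

Lemma psum_strict j k : (j < k)%N -> (k <= size al)%N -> (psum j < psum k)%N.
Proof.
move=> jk kl; apply: leq_trans (psum_mono (_ : j.+1 <= k)%N) => //.
apply: psum_ltS; exact: leq_trans jk kl.
Qed.

Lemma psum_lt_inv j k : (k <= size al)%N -> (psum j < psum k)%N -> (j < k)%N.
Proof.
move=> kl h; rewrite ltnNge; apply/negP => kj.
by move: (psum_mono kj); rewrite leqNgt h.
Qed.

Lemma psum_size : psum (size al) = n.
Proof. by rewrite psum_ge. Qed.

Lemma memDes d : (d \in Des al) = [exists k : 'I_(size al), (0 < k)%N && (d == psum k)].
Proof.
apply/mapP/existsP => [[k]|[k /andP[k0 /eqP ->]]].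
  rewrite mem_iota => /andP[k1 k2] ->.
  have kl : (k < size al)%N by lia.
  by exists (Ordinal kl); rewrite /= k1 eqxx.
exists (val k) => //; rewrite mem_iota k0 /=.
by case: k k0 => k /= kl _; lia.
Qed.

Lemma uniqDes : uniq (Des al).
Proof.
rewrite map_inj_in_uniq ?iota_uniq // => j k.
rewrite !mem_iota => /andP[_ hj] /andP[_ hk] e.
have {}e : psum j = psum k := e.
have [jl kl] : (j <= size al)%N /\ (k <= size al)%N by lia.
case: (ltngtP j k) => // h.
  by have := psum_strict h kl; rewrite e ltnn.
by have := psum_strict h jl; rewrite e ltnn.
Qed.

Lemma block_mono y z : (y <= z)%N -> (block y <= block z)%N.
Proof. move=> h; apply: sub_count => d /= dy; exact: leq_trans dy h. Qed.

Lemma blockS y : block y.+1 = block y + (y.+1 \in Des al).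
Proof.
rewrite /block -count_uniq_mem ?uniqDes // -count_predUI.
rewrite (@eq_count _ (predI _ _) pred0) ?count_pred0 ?addn0; last first.
  move=> d /=; apply/negbTE; rewrite negb_and -ltnNge.
  by case: eqP => [->|]; rewrite ?ltnSn ?orbT.
by apply: eq_count => d /=; rewrite leq_eqVlt ltnS orbC.
Qed.

Lemma block0 : (0 < n)%N -> block 0 = 0.
Proof.
move=> n0; apply/eqP; rewrite -leqn0 leqNgt -has_count; apply/hasP => -[d].
rewrite memDes => /existsP[k /andP[k0 /eqP ->]].
rewrite leqn0 => /eqP e.
by have := psum_strict k0 (ltnW (ltn_ord k)); rewrite psum0 e ltnn.
Qed.

Lemma block_bounds y : (y < n)%N ->
  [/\ (psum (block y) <= y)%N, (y < psum (block y).+1)%N & (block y < size al)%N].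
Proof.
elim: y => [|y IH] yn.
  have l0 : (0 < size al)%N.
    rewrite lt0n; apply/negP => /eqP e; move: psum_size; rewrite e psum0 => e'; lia.
  rewrite block0 //; split => //; first by rewrite psum0.
  by move: (psum_strict (ltn0Sn 0) l0); rewrite psum0.
have [h1 h2 h3] := IH (ltnW yn); rewrite blockS.
case hD: (y.+1 \in Des al) => /=.
  move: hD; rewrite memDes => /existsP[k /andP[k0 /eqP ek]].
  have kl := ltn_ord k.
  have mk : (block y < k)%N.
    apply: psum_lt_inv; first exact: ltnW. by rewrite -ek; lia.
  have km : (k <= (block y).+1)%N.
    rewrite leqNgt; apply/negP => h; move: (psum_strict h (ltnW kl)); lia.
  have ekm : (k : nat) = (block y).+1 by lia.
  rewrite addn1 -ekm -ek; split => //.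
  by rewrite ek psum_strict.
rewrite addn0; split => //; first exact: ltnW.
rewrite ltn_neqAle h2 andbT; apply/eqP => e.
case: (ltnP (block y).+1 (size al)) => hl.
  move/negbT: hD; rewrite memDes => /existsPn /(_ (Ordinal hl)).
  by rewrite /= e eqxx.
by move: e yn; rewrite psum_ge // => ->; rewrite ltnn.
Qed.

Lemma block_of_bounds y j : (y < n)%N -> (j < size al)%N ->
  (psum j <= y)%N -> (y < psum j.+1)%N -> block y = j.
Proof.
move=> yn jl h1 h2; have [g1 g2 g3] := block_bounds yn.
by case: (ltngtP (block y) j) => // h; have := psum_mono h; lia.
Qed.

(* Reflection of [y] in its block [[psum b, psum b.+1)], where [b = block y]. *)
Definition rev_in_block (y : nat) := psum (block y) + psum (block y).+1 - 1 - y.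

Lemma rev_in_block_props y : (y < n)%N ->
  [/\ (rev_in_block y < n)%N, block (rev_in_block y) = block y
     & rev_in_block (rev_in_block y) = y].
Proof.
move=> yn; have [g1 g2 g3] := block_bounds yn.
have hS : (psum (block y).+1 <= n)%N.
  rewrite -psum_size; exact: (psum_mono g3).
have r1 : (psum (block y) <= rev_in_block y)%N by rewrite /rev_in_block; lia.
have r2 : (rev_in_block y < psum (block y).+1)%N by rewrite /rev_in_block; lia.
have rl : (rev_in_block y < n)%N by lia.
have hb : block (rev_in_block y) = block y by apply: block_of_bounds.
split => //; rewrite {1}/rev_in_block hb /rev_in_block; lia.
Qed.

Lemma rev_in_block_lt (x : 'I_n) : (rev_in_block x < n)%N.
Proof. by case: (rev_in_block_props (ltn_ord x)). Qed.

Definition rev_in_block_ord (x : 'I_n) : 'I_n := Ordinal (rev_in_block_lt x).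

Lemma rev_in_block_ordK : involutive rev_in_block_ord.
Proof. by move=> x; apply: val_inj => /=; case: (rev_in_block_props (ltn_ord x)). Qed.

(* The paper's w0(alpha^c), the longest element of the Young subgroup of alpha. *)
Definition w0c : 'S_n := perm (can_inj rev_in_block_ordK).

Lemma w0cE x : val (w0c x) = rev_in_block x.
Proof. by rewrite permE. Qed.

Lemma w0cK x : w0c (w0c x) = x.
Proof. by rewrite !permE rev_in_block_ordK. Qed.

Lemma block_w0c x : block (w0c x) = block x.
Proof. by rewrite w0cE; case: (rev_in_block_props (ltn_ord x)). Qed.

Lemma w0c_rev (x y : 'I_n) : block x = block y -> (x < y)%N -> (w0c y < w0c x)%N.
Proof.
move=> e xy; rewrite !w0cE /rev_in_block e.
have [g1 g2 g3] := block_bounds (ltn_ord x).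
have [h1 h2 h3] := block_bounds (ltn_ord y).
rewrite e in g1 g2; lia.
Qed.

Lemma w0c_mono (x y : 'I_n) : (block x < block y)%N -> (w0c x < w0c y)%N.
Proof.
move=> e; rewrite !w0cE /rev_in_block.
have [g1 g2 g3] := block_bounds (ltn_ord x).
have [h1 h2 h3] := block_bounds (ltn_ord y).
have := psum_mono e; lia.
Qed.

Lemma block_lt (x y : 'I_n) : (x < y)%N -> block x != block y -> (block x < block y)%N.
Proof. by move=> xy ne; rewrite ltn_neqAle ne block_mono // ltnW. Qed.

Lemma ltn_w0c_cross (x y : 'I_n) : block x != block y -> (w0c x < w0c y)%N = (x < y)%N.
Proof.
move=> ne; case: (ltngtP x y) => [xy|yx|/val_inj exy].
- exact/w0c_mono/block_lt.
- by apply/negbTE; rewrite -leqNgt ltnW // w0c_mono // block_lt // eq_sym.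
- by move: ne; rewrite exy eqxx.
Qed.

Lemma block_succ (p q : 'I_n) : q = p.+1 :> nat ->
  block q = block p + ((q : nat) \in Des al).
Proof. by move=> /= e; rewrite e blockS -e. Qed.

Lemma block_succ_eq (p q : 'I_n) : q = p.+1 :> nat ->
  (block p == block q) = ((q : nat) \notin Des al).
Proof.
by move=> e; rewrite (block_succ e) -{1}[block p]addn0 eqn_add2l; case: (_ \in _).
Qed.

Lemma block_chain (R : rel 'I_n) : transitive R ->
  (forall p q : 'I_n, q = p.+1 :> nat -> block p = block q -> R p q) ->
  forall x y : 'I_n, block x = block y -> (x < y)%N -> R x y.
Proof.
move=> trR Rsucc x y; have [m] := ubnP (nat_of_ord y); elim: m y => // m IH y ym e xy.
have zn : (y.-1 < n)%N by apply: leq_ltn_trans (leq_pred _) (ltn_ord y).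
set z := Ordinal zn.
have ezy : nat_of_ord y = z.+1 by rewrite /=; lia.
have bz : block z = block y.
  apply/eqP; rewrite eqn_leq block_mono /=; last by lia.
  by rewrite -e block_mono //= -ltnS -ezy.
case: (eqVneq (nat_of_ord x) z) => [/val_inj -> | hx]; first exact: Rsucc.
apply: trR (Rsucc _ _ ezy bz); apply: IH; rewrite ?bz //=; lia.
Qed.

Lemma wDes_w0c : wDes w0c =1 DesC n al.
Proof.
move=> d; rewrite /DesC; apply/idP/idP.
  case/wDes_exists => p [q [e1 lt ->]]; rewrite -(block_succ_eq e1) ltn_ord e1 /=.
  by apply: contraTT lt => ne; rewrite -leqNgt ltnW // ltn_w0c_cross // e1.
case/and3P => d0 dn hD.
have pn : (d.-1 < n)%N by lia.
have e : Ordinal dn = (Ordinal pn).+1 :> nat by rewrite /=; lia.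
rewrite -[d]/(val (Ordinal dn)) (wDes_succ _ e); apply: w0c_rev => /=; last by lia.
by apply/eqP; rewrite (block_succ_eq e).
Qed.

Definition block_pairs :=
  [set pq : 'I_n * 'I_n | (pq.1 < pq.2)%N && (block pq.1 == block pq.2)].

Lemma inversions_w0c : inversions w0c = block_pairs.
Proof.
apply/setP => -[x y]; rewrite !inE /=.
case xy: (x < y)%N => //=; case: (eqVneq (block x) (block y)) => e.
  by rewrite w0c_rev.
by rewrite ltn_w0c_cross 1?eq_sym // ltnNge ltnW.
Qed.

Lemma wDesC_block_decr (v : 'S_n) : wDes v =1 DesC n al ->
  forall x y : 'I_n, block x = block y -> (x < y)%N -> (v y < v x)%N.
Proof.
move=> hv; apply: (@block_chain (fun x y => v y < v x)%N).
  by move=> y x z /= yx zy; apply: ltn_trans zy yx.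
move=> p q e1 /eqP e2; rewrite -(wDes_succ _ e1) hv /DesC e1 ltn0Sn -e1 ltn_ord /=.
by rewrite -(block_succ_eq e1).
Qed.

Lemma is_w0cE (v : 'S_n) : is_w0c al v -> v = w0c.
Proof.
case=> hv vmin; apply: inversions_inj; apply/eqP; rewrite eq_sym eqEcard.
have sub : block_pairs \subset inversions v.
  apply/subsetP => -[x y]; rewrite !inE /= => /andP[xy /eqP e].
  by rewrite xy (wDesC_block_decr hv).
by rewrite inversions_w0c sub -inversions_w0c -!lenE vmin //; exact: wDes_w0c.
Qed.

Definition block_incr (w : 'S_n) :=
  forall x y : 'I_n, block x = block y -> (x < y)%N -> (w x < w y)%N.

Lemma isOP_block_incr w : isOP al w -> block_incr w.
Proof.
move=> hw; apply: block_chain => [y x z|p q e1 /eqP e2]; first exact: ltn_trans.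
rewrite (block_succ_eq e1) in e2.
have := forallP hw q; rewrite (wDes_succ _ e1) (negbTE e2) implybF -leqNgt leq_eqVlt.
case/orP => [/eqP/val_inj/perm_inj qp|//].
by move: e1; rewrite qp; lia.
Qed.

Lemma block_incr_isOP w : block_incr w -> isOP al w.
Proof.
move=> hw; apply/forallP => d; apply/implyP => /wDes_exists[p [q [e1 lt /val_inj ->]]].
apply: contraTT lt => hD; rewrite -leqNgt ltnW // hw //.
  by apply/eqP; rewrite (block_succ_eq e1).
by rewrite e1.
Qed.

Lemma block_incr_lmul w i : block_incr w -> validgen i ->
  block (pos w i) != block (pos w (nxt i)) -> block_incr (lmul i w).
Proof.
move=> hw vi hb x y e xy; rewrite !lmulE ltn_sgen //; first exact: hw.
  apply/negP => /andP[/eqP h1 /eqP h2]; move: hb.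
  by rewrite -h2 -h1 !pos_app e eqxx.
apply/negP => /andP[/eqP h1 /eqP h2].
have := hw x y e xy; rewrite h1 h2 nxtE //; lia.
Qed.

Lemma block_lt_ltn (x y : 'I_n) : (block x < block y)%N -> (x < y)%N.
Proof. by apply: contraTT; rewrite -!leqNgt; apply: block_mono. Qed.

Lemma pos_succ_same_block w i : block_incr w -> validgen i ->
  block (pos w i) = block (pos w (nxt i)) -> pos w (nxt i) = (pos w i).+1 :> nat.
Proof.
move=> hw vi e; set a := pos w i in e *; set b := pos w (nxt i) in e *.
have [wa wb] : w a = i /\ w b = nxt i by rewrite !app_pos.
have hn := nxtE vi.
have ab : (a < b)%N.
  case: (ltngtP a b) => // [ba|/val_inj eab].
    by have := hw b a (esym e) ba; rewrite wa wb hn; lia.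
  by move: (pos_neq w vi); rewrite -/a -/b eab eqxx.
apply/eqP; rewrite eqn_leq ab andbT leqNgt; apply/negP => ab1.
set c := Ordinal (ltn_trans ab1 (ltn_ord b)).
have [ac cb] : block a = block c /\ block c = block b.
  have ec : nat_of_ord c = a.+1 by [].
  by rewrite ec; have := block_mono (leqnSn a); have := block_mono (ltnW ab1); lia.
by have := hw a c ac (ltnSn a); have := hw c b cb ab1; rewrite wa wb hn; lia.
Qed.

Lemma pos_w0c x : pos w0c x = w0c x.
Proof. by rewrite /pos -{1}(w0cK x) permK. Qed.

Lemma tgt_w0c i : validgen i -> block i = block (nxt i) -> tgt i w0c = w0c.
Proof.
move=> vi e; rewrite tgtE // !pos_w0c ltnNge ltnW //.
by apply: w0c_rev e _; rewrite nxtE.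
Qed.

Lemma inversions_w0cM w : block_incr w ->
  inversions (w0c * w)%g =
  block_pairs :|: (fun pq => (w0c pq.1, w0c pq.2)) @^-1: inversions w.
Proof.
move=> hw; apply/setP => -[x y]; rewrite !inE /= !permM.
case: (eqVneq (block x) (block y)) => e; last by rewrite andbF ltn_w0c_cross.
rewrite andbT; case: (ltngtP x y) => [xy|yx|/val_inj ->]; rewrite ?ltnn //=.
  by rewrite hw ?block_w0c ?w0c_rev.
have lt : (w0c x < w0c y)%N := w0c_rev (esym e) yx.
by rewrite lt ltnNge ltnW // hw ?block_w0c.
Qed.

Lemma len_w0cM w : block_incr w -> len (w0c * w)%g = (len w0c + len w)%N.
Proof.
move=> hw; set g := fun pq : 'I_n * 'I_n => (w0c pq.1, w0c pq.2).
have gK : involutive g by move=> -[x y]; rewrite /g /= !w0cK.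
have dj : block_pairs :&: g @^-1: inversions w = set0.
  apply/setP => -[x y]; rewrite !inE /=; apply/negbTE.
  case: (eqVneq (block x) (block y)) => e; rewrite ?andbF //= andbT.
  by apply/and3P => -[xy lt _]; move: (w0c_rev e xy); rewrite ltnNge ltnW.
rewrite !lenE inversions_w0cM // cardsU dj cards0 subn0 card_preimset ?inversions_w0c //.
exact: can_inj gK.
Qed.

End Composition.

Local Open Scope ring_scope.

Lemma sum_delta (R : nzRingType) (T : finType) (t0 : T) (f : T -> R) :
  \sum_(t : T) (t == t0)%:R * f t = f t0.
Proof.
rewrite (bigD1 t0) //= eqxx mul1r big1 ?addr0 // => t /negbTE ->.
by rewrite mul0r.
Qed.

Section HeckeOperators.
Variables (n : nat) (F : fieldType).
Implicit Types (i j : 'I_n) (w : 'S_n) (ws : seq 'I_n) (h : Hn n F).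

Lemma hpiE i h u : hpi i h u = \sum_(w | tgt i w == u) h w.
Proof. by rewrite ffunE. Qed.

Lemma sum_comp (f g : 'S_n -> 'S_n) (H : 'S_n -> F) u :
  \sum_(w' | f w' == u) \sum_(w | g w == w') H w = \sum_(w | f (g w) == u) H w.
Proof.
rewrite [RHS](partition_big g (fun w' => f w' == u)) //=.
apply: eq_bigr => w' /eqP fw; apply: eq_bigl => w.
by apply/idP/andP => [/eqP gw|[_ ->//]]; rewrite gw fw eqxx.
Qed.

Lemma hpi2E i j h u : hpi i (hpi j h) u = \sum_(w | tgt i (tgt j w) == u) h w.
Proof.
by rewrite hpiE -(sum_comp (tgt i) (tgt j)); apply: eq_bigr => w' _; rewrite hpiE.
Qed.

Lemma hpi3E i j k h u :
  hpi i (hpi j (hpi k h)) u = \sum_(w | tgt i (tgt j (tgt k w)) == u) h w.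
Proof.
rewrite hpi2E -(sum_comp (fun w => tgt i (tgt j w)) (tgt k)).
by apply: eq_bigr => w' _; rewrite hpiE.
Qed.

Lemma hpi_lin i (m : nat) (c : 'I_m -> F) (y : 'I_m -> Hn n F) :
  hpi i [ffun u => \sum_(k < m) c k * y k u] =
  [ffun u => \sum_(k < m) c k * hpi i (y k) u].
Proof.
apply/ffunP => u; rewrite !ffunE; under eq_bigr do rewrite ffunE.
by rewrite exchange_big /=; apply: eq_bigr => k _; rewrite hpiE mulr_sumr.
Qed.

Lemma hpiD i (x y : Hn n F) : hpi i (x + y) = hpi i x + hpi i y.
Proof.
by apply/ffunP => u; rewrite !ffunE -big_split; apply: eq_bigr => w _; rewrite !ffunE.
Qed.

Lemma hpiB i (x y : Hn n F) : hpi i (x - y) = hpi i x - hpi i y.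
Proof.
by apply/ffunP => u; rewrite !ffunE -sumrB; apply: eq_bigr => w _; rewrite !ffunE.
Qed.

Lemma hpi0 i : hpi i (0 : Hn n F) = 0.
Proof. by apply/ffunP => u; rewrite !ffunE big1 // => w _; rewrite ffunE. Qed.

Lemma hpi_eH i w : hpi i (eH F w) = eH F (tgt i w).
Proof.
apply/ffunP => u; rewrite hpiE ffunE (eq_bigr (fun w' => (w' == w)%:R)); last first.
  by move=> w' _; rewrite ffunE.
rewrite big_mkcond (bigD1 w) //= eqxx big1 ?addr0; last by move=> w' /negbTE ->; case: ifP.
by rewrite eq_sym; case: eqP.
Qed.

Lemma hpi_idem i h : validgen i -> hpi i (hpi i h) = hpi i h.
Proof.
by move=> vi; apply/ffunP => u; rewrite hpi2E hpiE; apply: eq_bigl => w; rewrite tgt_idem.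
Qed.

Lemma hpi_far i j h : validgen i -> validgen j -> (i.+1 < j)%N ->
  hpi i (hpi j h) = hpi j (hpi i h).
Proof.
by move=> vi vj ij; apply/ffunP => u; rewrite !hpi2E; apply: eq_bigl => w; rewrite tgt_far.
Qed.

Lemma hpi_braid i j h : validgen i -> validgen j -> val j = i.+1 ->
  hpi i (hpi j (hpi i h)) = hpi j (hpi i (hpi j h)).
Proof.
by move=> vi vj ij; apply/ffunP => u; rewrite !hpi3E; apply: eq_bigl => w; rewrite tgt_braid.
Qed.

Lemma hpi_hpibar i h : validgen i -> hpi i (hpibar i h) = 0.
Proof. by move=> vi; rewrite /hpibar hpiB hpi_idem // subrr. Qed.

Lemma hpibar_far i j h : validgen i -> validgen j -> (i.+1 < j)%N ->
  hpibar i (hpibar j h) = hpibar j (hpibar i h).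
Proof.
move=> vi vj ij; rewrite /hpibar !hpiB hpi_far //.
move: (hpi j (hpi i h)) (hpi i h) (hpi j h) => X A B.
by apply/ffunP => u; rewrite !ffunE; ring.
Qed.

Lemma hpibar_braid i j h : validgen i -> validgen j -> val j = i.+1 ->
  hpibar i (hpibar j (hpibar i h)) = hpibar j (hpibar i (hpibar j h)).
Proof.
move=> vi vj ij; rewrite /hpibar !hpiB !hpi_idem // hpi_braid //.
move: (hpi j (hpi i (hpi j h))) (hpi i (hpi j h)) (hpi j (hpi i h)) (hpi i h) (hpi j h).
by move=> X A B C D; apply/ffunP => u; rewrite !ffunE; ring.
Qed.

Lemma hpibar_word0 ws : hpibar_word ws (0 : Hn n F) = 0.
Proof. by elim: ws => //= i ws ->; rewrite /hpibar hpi0 subr0. Qed.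

Lemma hpibar_word_lead (v : 'S_n) (P : 'S_n -> Prop) :
  (forall w, P w -> len (v * w)%g = (len v + len w)%N) ->
  (forall w i, P w -> validgen i -> (pos w (nxt i) < pos w i)%N -> P (lmul i w)) ->
  forall ws w, reduced_word ws w -> P w ->
  exists2 g : Hn n F, hpibar_word ws (eH F v) = eH F (v * w)%g + g &
    forall x, (len (v * w)%g <= len x)%N -> g x = 0.
Proof.
move=> lenM Plmul; elim=> [|i ws IH] w.
  move=> /reduced_nil -> _; exists 0; first by rewrite mulg1 addr0.
  by move=> x _; rewrite ffunE.
case/reduced_cons => vi rws di Pw.
have Pw' := Plmul _ _ Pw vi di.
have [g' e' g'0] := IH _ rws Pw'.
have lvw : len (v * w)%g = (len (v * lmul i w)%g).+1.
  by rewrite !lenM // (len_lmul_down vi di) addnS.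
have tvw : tgt i (v * lmul i w)%g = (v * w)%g.
  by rewrite /tgt /lmul -mulgA -/(lmul i (lmul i w)) lmulK lvw ltnSn.
exists (hpi i g' - eH F (v * lmul i w)%g - g').
  rewrite /= e' /hpibar hpiD hpi_eH tvw.
  move: (eH F (v * w)%g) (eH F (v * lmul i w)%g) (hpi i g') => X Y Z.
  by apply/ffunP => u; rewrite !ffunE; ring.
move=> x hx; rewrite !ffunE big1 => [|y /eqP ty]; last first.
  by apply: g'0; have := len_tgt y vi; rewrite ty; lia.
have -> : (x == (v * lmul i w)%g) = false.
  by apply/negbTE/eqP => ex; move: hx; rewrite ex lvw ltnn.
by rewrite g'0 ?subrr ?sub0r ?oppr0 //; lia.
Qed.

End HeckeOperators.

Section Span.
Variables (n : nat) (F : fieldType) (A : finType).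
Variable op : 'I_n -> {ffun A -> F} -> {ffun A -> F}.
Hypothesis op_lin : forall i (m : nat) (c : 'I_m -> F) (y : 'I_m -> {ffun A -> F}),
  op i [ffun t => \sum_(k < m) c k * y k t] = [ffun t => \sum_(k < m) c k * op i (y k) t].
Variable x0 : {ffun A -> F}.

(* [x] lies in the submodule generated by [x0]; part (1) of the theorem and
   [in_left_ideal] are instances. *)
Definition spanned (x : {ffun A -> F}) :=
  exists m (c : 'I_m -> F) (ws : 'I_m -> seq 'I_n),
  (forall k, validword (ws k)) /\ x = [ffun t => \sum_(k < m) c k * foldr op x0 (ws k) t].

Lemma spanned_gen : spanned x0.
Proof.
exists 1%N, (fun _ => 1), (fun _ => [::]); split => //.
by apply/ffunP => t; rewrite ffunE big_ord1 mul1r.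
Qed.

Lemma spanned0 : spanned 0.
Proof.
exists 0%N, (fun _ => 1), (fun _ => [::]); split => //.
by apply/ffunP => t; rewrite !ffunE big_ord0.
Qed.

Lemma spannedD x y : spanned x -> spanned y -> spanned (x + y).
Proof.
move=> [m1 [c1 [ws1 [v1 ->]]]] [m2 [c2 [ws2 [v2 ->]]]].
exists (m1 + m2)%N, (fun k => match split k with inl a => c1 a | inr b => c2 b end),
  (fun k => match split k with inl a => ws1 a | inr b => ws2 b end); split.
  by move=> k; case: (split k).
apply/ffunP => t; rewrite !ffunE big_split_ord /=.
by congr (_ + _); apply: eq_bigr => k _;
  rewrite (unsplitK (inl _ : 'I_m1 + 'I_m2)) || rewrite (unsplitK (inr _ : 'I_m1 + 'I_m2)).
Qed.

Lemma spannedZ a x : spanned x -> spanned [ffun t => a * x t].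
Proof.
move=> [m [c [ws [v ->]]]]; exists m, (fun k => a * c k), ws; split => //.
by apply/ffunP => t; rewrite !ffunE mulr_sumr; apply: eq_bigr => k _; rewrite mulrA.
Qed.

Lemma spanned_op i x : validgen i -> spanned x -> spanned (op i x).
Proof.
move=> vi [m [c [ws [v ->]]]]; exists m, c, (fun k => i :: ws k); split.
  by move=> k; rewrite /validword /= vi; exact: v.
by rewrite op_lin.
Qed.

Lemma spanned_sum (I : finType) (f : I -> F) (y : I -> {ffun A -> F}) :
  (forall j, spanned (y j)) -> spanned [ffun t => \sum_j f j * y j t].
Proof.
move=> hy; have -> : [ffun t => \sum_j f j * y j t] = \sum_j [ffun t => f j * y j t].
  by apply/ffunP => t; rewrite ffunE sum_ffunE; apply: eq_bigr => j _; rewrite ffunE.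
by apply: (big_ind spanned spanned0 spannedD) => j _; apply: spannedZ.
Qed.

Lemma spanned_ind (P : {ffun A -> F} -> Prop) :
  P x0 -> P 0 -> (forall x y, P x -> P y -> P (x + y)) ->
  (forall a x, P x -> P [ffun t => a * x t]) ->
  (forall i x, validgen i -> P x -> P (op i x)) ->
  forall x, spanned x -> P x.
Proof.
move=> Px0 P0 PD PZ Pop x [m [c [ws [v ->]]]].
have -> : [ffun t => \sum_(k < m) c k * foldr op x0 (ws k) t] =
    \sum_(k < m) [ffun t => c k * foldr op x0 (ws k) t].
  by apply/ffunP => t; rewrite ffunE sum_ffunE; apply: eq_bigr => j _; rewrite ffunE.
apply: (big_ind P P0 PD) => k _; apply: PZ.
by have := v k; elim: (ws k) => //= i w IH /andP[vi vw]; apply: Pop => //; apply: IH.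
Qed.

End Span.

Section OrderedSetPartitionModule.
Variables (n : nat) (F : fieldType) (al : seq nat).
Hypothesis Hal : is_composition n al.
Variable rw : 'S_n -> seq 'I_n.
Hypothesis rwP : forall w, reduced_word (rw w) w.
Implicit Types (i : 'I_n) (w : 'S_n) (s t : OP n al) (h : Hn n F) (x : Mod n F al).

Local Notation block := (block al).
Local Notation w0c := (w0c Hal).

Lemma opi_lin i (m : nat) (c : 'I_m -> F) (y : 'I_m -> Mod n F al) :
  opi i [ffun t => \sum_(k < m) c k * y k t] =
  [ffun t => \sum_(k < m) c k * opi i (y k) t].
Proof.
apply/ffunP => u; rewrite !ffunE; under eq_bigr do rewrite ffunE mulr_suml.
rewrite exchange_big /=; apply: eq_bigr => k _; rewrite ffunE mulr_sumr.
by apply: eq_bigr => s _; rewrite mulrA.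
Qed.

Lemma opi_eM i s : opi i (eM F s) = [ffun t => opcoef F i s t].
Proof.
by apply/ffunP => t; rewrite !ffunE; under eq_bigr do rewrite ffunE; rewrite sum_delta.
Qed.

Lemma block_incr_OP s : block_incr al (val s).
Proof. exact: (isOP_block_incr Hal (valP s)). Qed.

Lemma opi_eM_up i s t : validgen i ->
  (block (pos (val s) i) < block (pos (val s) (nxt i)))%N ->
  val t = lmul i (val s) -> opi i (eM F s) = eM F s + eM F t.
Proof.
move=> vi lt st; apply/ffunP => u; rewrite opi_eM !ffunE /opcoef.
by rewrite !blkE ltnNge ltnW //= lt -!val_eqE st.
Qed.

Lemma hpibar_word_reduced h w ws : reduced_word ws w ->
  hpibar_word ws h = hpibar_word (rw w) h.
Proof. by move=> r; apply: (matsumoto (@hpibar_far n F) (@hpibar_braid n F) rwP h r). Qed.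

Lemma hpibar_word_lmul_up h w i : validgen i -> (pos w i < pos w (nxt i))%N ->
  hpibar_word (rw (lmul i w)) h = hpibar i (hpibar_word (rw w) h).
Proof.
move=> vi lt; rewrite -(@hpibar_word_reduced _ _ (i :: rw w)) //.
by apply: reduced_consI; rewrite ?lmulK ?pos_lmul ?sgenL ?sgenR.
Qed.

Lemma hpi_hpibar_word_down h w i : validgen i -> (pos w (nxt i) < pos w i)%N ->
  hpi i (hpibar_word (rw w) h) = 0.
Proof.
move=> vi lt; have lt' : (pos (lmul i w) i < pos (lmul i w) (nxt i))%N.
  by rewrite !pos_lmul sgenL sgenR.
by rewrite -{1}(lmulK i w) hpibar_word_lmul_up // hpi_hpibar.
Qed.

Definition phi_basis s : Hn n F := hpibar_word (rw (val s)) (eH F w0c).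

Definition phi x : Hn n F := [ffun u => \sum_s x s * phi_basis s u].

(* If [i] and [i+1] lie in one block of [w], they sit at adjacent positions
   [a] and [a+1], so that [s_i w = w s_a] and [pi_a] is absorbed by [pi_{w0c}]. *)
Lemma hpibar_phi_basis_same_block i s : validgen i ->
  block (pos (val s) i) = block (pos (val s) (nxt i)) -> hpibar i (phi_basis s) = 0.
Proof.
move=> vi e; set w := val s in e *; set a := pos w i.
have ab := pos_succ_same_block Hal (block_incr_OP s) vi e.
have va : validgen a by rewrite /validgen -ab.
have nab : pos w (nxt i) = nxt a by apply: val_inj; rewrite nxtE.
have lt : (pos w i < pos w (nxt i))%N by rewrite ab.
have pe : lmul i w = (sgen a * w)%g by rewrite lmul_tperm_pos nab.
have r : reduced_word (rcons (rw w) a) (lmul i w).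
  by rewrite pe; apply: reduced_rcons => //; rewrite -pe len_lmul_up.
have ea : block a = block (nxt a) by rewrite -nab.
rewrite /phi_basis -/w -hpibar_word_lmul_up // -(hpibar_word_reduced _ r).
rewrite /hpibar_word foldr_rcons /= {2}/hpibar hpi_eH tgt_w0c // subrr.
exact: hpibar_word0.
Qed.

Lemma opcoef_phi_basis i s u : validgen i ->
  \sum_t opcoef F i s t * phi_basis t u = hpi i (phi_basis s) u.
Proof.
move=> vi; set w := val s; rewrite /opcoef -/w !blkE.
case: (ltngtP (block (pos w (nxt i))) (block (pos w i))) => [lt|lt|e].
- rewrite big1 => [|t _]; last by rewrite mul0r.
  by rewrite /phi_basis hpi_hpibar_word_down ?ffunE //; apply: block_lt_ltn lt.
- have ne : block (pos w i) != block (pos w (nxt i)) by rewrite neq_ltn lt.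
  set s' : OP n al := exist _ (lmul i w)
    (block_incr_isOP Hal (block_incr_lmul Hal (block_incr_OP s) vi ne)).
  rewrite (eq_bigr (fun t => (t == s)%:R * phi_basis t u + (t == s')%:R * phi_basis t u)).
    rewrite big_split !sum_delta /phi_basis [val s']/= hpibar_word_lmul_up // -/w.
      by rewrite /hpibar !ffunE /= addrC subrK.
    exact: block_lt_ltn lt.
  by move=> t _; rewrite mulrDl -!val_eqE.
- rewrite sum_delta; have := hpibar_phi_basis_same_block vi (esym e).
  by rewrite /hpibar => /subr0_eq ->.
Qed.

Lemma phi_hpi i x : validgen i -> phi (opi i x) = hpi i (phi x).
Proof.
move=> vi; apply/ffunP => u; rewrite !ffunE.
under eq_bigr do rewrite ffunE mulr_suml.
under [RHS]eq_bigr do rewrite ffunE.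
rewrite exchange_big [RHS]exchange_big /=; apply: eq_bigr => t _.
rewrite (eq_bigr (fun s => x t * (opcoef F i t s * phi_basis s u))) => [|s _]; last first.
  by rewrite mulrA.
by rewrite -mulr_sumr opcoef_phi_basis // hpiE mulr_sumr.
Qed.

Lemma phi_basis_lead t : exists2 g : Hn n F,
  phi_basis t = eH F (w0c * val t)%g + g &
  forall u, (len (w0c * val t)%g <= len u)%N -> g u = 0.
Proof.
apply: (@hpibar_word_lead n F w0c (block_incr al)) (rwP _) (block_incr_OP t).
  by move=> w; apply: len_w0cM.
move=> w i hw vi lt; apply: (block_incr_lmul Hal hw vi); apply/eqP => e.
have := hw _ _ (esym e) lt; rewrite !app_pos nxtE //; lia.
Qed.

Lemma phiB x y : phi (x - y) = phi x - phi y.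
Proof.
apply/ffunP => u; rewrite !ffunE -sumrB.
by apply: eq_bigr => s _; rewrite !ffunE mulrBl.
Qed.

(* The coefficient of a support element [s] maximising [len (w0c * s)] can be
   read off at [w0c * s], where no other term of [phi x] contributes. *)
Lemma phi_eq0 x : phi x = 0 -> x = 0.
Proof.
move=> x0; apply/ffunP => s0; rewrite ffunE; apply/eqP/negPn/negP => xs0.
have [s /= xs smax] :=
  @arg_maxnP _ s0 (fun s => x s != 0) (fun s => len (w0c * val s)%g) xs0.
have := congr1 (fun f : Hn n F => f (w0c * val s)%g) x0; rewrite !ffunE.
rewrite (bigD1 s) //= big1 ?addr0 => [|t ts].
  have [g -> g0] := phi_basis_lead s.
  by rewrite !ffunE eqxx g0 // addr0 mulr1 => /eqP; rewrite (negbTE xs).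
case: (eqVneq (x t) 0) => [->|xt]; first by rewrite mul0r.
have [g -> g0] := phi_basis_lead t.
rewrite !ffunE g0 ?smax // addr0.
suff -> : ((w0c * val s)%g == (w0c * val t)%g) = false by rewrite mulr0.
by apply/negbTE; apply: contra ts => /eqP /mulgI /val_inj ->.
Qed.

Lemma phi_inj : injective phi.
Proof.
move=> x y e; apply/eqP; rewrite -subr_eq0; apply/eqP/phi_eq0.
by rewrite phiB e subrr.
Qed.

Lemma phi_basis_spanned s : spanned (@hpi n F) (eH F w0c) (phi_basis s).
Proof.
rewrite /phi_basis; case/and3P: (rwP (val s)) => + _ _.
elim: (rw (val s)) => [_|i ws IH /andP[vi vws]] /=; first exact: spanned_gen.
have -> : hpibar i (hpibar_word ws (eH F w0c)) =
    hpi i (hpibar_word ws (eH F w0c)) + [ffun t => -1 * hpibar_word ws (eH F w0c) t].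
  by apply/ffunP => t; rewrite /hpibar !ffunE; ring.
apply: spannedD; last exact: spannedZ (IH vws).
by apply: spanned_op => //; [exact: hpi_lin | exact: IH].
Qed.

Variable s0 : OP n al.
Hypothesis s0_id : val s0 = 1%g.

Lemma phi_eM_gen : phi (eM F s0) = eH F w0c.
Proof.
apply/ffunP => u; rewrite ffunE; under eq_bigr do rewrite ffunE.
rewrite sum_delta /phi_basis s0_id.
by case/and3P: (rwP 1%g) => _ _; rewrite len1 size_eq0 => /eqP ->.
Qed.

Lemma phi_image h : in_left_ideal (eH F w0c) h <-> exists x, phi x = h.
Proof.
split => [hh | [x <-]]; last first.
  by apply: spanned_sum => s; apply: phi_basis_spanned.
apply: (spanned_ind (P := fun h => exists x, phi x = h)) hh.
- by exists (eM F s0); exact: phi_eM_gen.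
- by exists 0; apply/ffunP => u; rewrite !ffunE big1 // => s _; rewrite ffunE mul0r.
- move=> _ _ [x1 <-] [x2 <-]; exists (x1 + x2); apply/ffunP => u.
  by rewrite !ffunE -big_split; apply: eq_bigr => s _; rewrite ffunE mulrDl.
- move=> a _ [x <-]; exists [ffun s => a * x s]; apply/ffunP => u.
  by rewrite !ffunE mulr_sumr; apply: eq_bigr => s _; rewrite ffunE mulrA.
- by move=> i _ vi [x <-]; exists (opi i x); apply: phi_hpi.
Qed.

(* Induction on the length of [w]: if [w = s_i w'] is reduced, the letter [i+1]
   precedes [i] in [w] in an earlier block, so [pi_i] maps [(w', alpha)] to
   [(w', alpha) + (w, alpha)]. *)
Lemma eM_spanned s : spanned (@opi n F al) (eM F s0) (eM F s).
Proof.
have [k] := ubnP (len (val s)); elim: k s => // k IH s lk.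
case e: (rw (val s)) => [|i ws].
  have /reduced_nil s1 : reduced_word [::] (val s) by rewrite -e.
  have -> : s = s0 by apply: val_inj; rewrite s0_id.
  exact: spanned_gen.
have := rwP (val s); rewrite e => /reduced_cons[vi _ lt].
set w := val s in lk lt.
have hw := block_incr_OP s.
have ne : block (pos w i) != block (pos w (nxt i)).
  by apply/eqP => eb; have := hw _ _ (esym eb) lt; rewrite !app_pos nxtE //; lia.
set s' : OP n al := exist _ (lmul i w)
  (block_incr_isOP Hal (block_incr_lmul Hal hw vi ne)).
have lt' : (block (pos (val s') i) < block (pos (val s') (nxt i)))%N.
  by rewrite /= !pos_lmul sgenL sgenR; apply: block_lt => //; rewrite eq_sym.
have -> : eM F s = opi i (eM F s') + [ffun t => -1 * eM F s' t].
  have ss' : val s = lmul i (val s') by rewrite /= lmulK.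
  by apply/ffunP => t; rewrite (opi_eM_up vi lt' ss') !ffunE; ring.
have ls' : (len (val s') < k)%N by move: lk; rewrite (len_lmul_down vi lt).
apply: spannedD; last exact: spannedZ (IH s' ls').
by apply: spanned_op => //; [exact: opi_lin | exact: IH].
Qed.

Lemma Mod_cyclic x : spanned (@opi n F al) (eM F s0) x.
Proof.
have -> : x = [ffun t => \sum_s x s * eM F s t].
  apply/ffunP => t; rewrite ffunE; under eq_bigr do rewrite ffunE mulrC eq_sym.
  by rewrite sum_delta.
exact: spanned_sum eM_spanned.
Qed.

End OrderedSetPartitionModule.

Theorem mainTheorem10 (F : fieldType) (n : nat) (al : seq nat)
  (Hal : is_composition n al)
  (* v = w0(alpha^c) *)
  (v : 'S_n) (Hv : is_w0c al v)
  (* a choice of reduced expression for every permutation *)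
  (rw : 'S_n -> seq 'I_n) (Hrw : forall w : 'S_n, reduced_word (rw w) w)
  (* sigma0 = (12...n, alpha) *)
  (s0 : OP n al) (Hs0 : val s0 = 1%g) :
  (* (1) F[OP_alpha] is cyclic, generated by (12...n, alpha) *)
  (forall x : @Mod n F al,
     exists (m : nat) (c : 'I_m -> F) (ws : 'I_m -> seq 'I_n),
       (forall k, validword (ws k)) /\
       x = [ffun t => \sum_(k < m) c k * opi_word (ws k) (@eM n F al s0) t]) /\
  (* (2) the linear map phi : (w, alpha) |-> pibar_w pi_{w0(alpha^c)} *)
  (let phi := fun x : @Mod n F al =>
      [ffun u => \sum_(s : OP n al) x s * hpibar_word (rw (val s)) (@eH n F v) u] in
   (* is H_n(0)-linear *)
   (forall i x, validgen i -> phi (opi i x) = hpi i (phi x)) /\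
   (* injective *)
   injective phi /\
   (* with image exactly P_{(n),alpha} = H_n(0) pi_{w0(alpha^c)} *)
   (forall h : Hn n F, in_left_ideal (@eH n F v) h <-> exists x, phi x = h)).
Proof.
rewrite (is_w0cE Hal Hv); split; first exact: Mod_cyclic Hs0.
split; first by move=> i x; exact: phi_hpi.
split; first exact: phi_inj.
exact: phi_image Hs0.
Qed.
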